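(* Let $M^{n+1}$ have non-negative sectional curvature, let $V$ be a self-adjoint family of Jacobi fields along a geodesic $c:[t_0,t_2]\to M$, let $t_1\in(t_0,t_2)$, and suppose $X\in V$ satisfies on $[t_0,t_1]$ the conditions: (a) $\|X\|(t)\neq0$ and $\|X\|'(t)=0$ for $t=t_0,t_1$; (b) if $Y\in V$ and $\langle X(t_1),Y(t_1)\rangle=0$ then $\langle X(t_0),Y(t_0)\rangle=0$; (c) if $Y\in V$ and $Y(t)=0$ for some $t\in(t_0,t_1)$ then $\langle X(t_0),Y(t_0)\rangle=0$; (d) if $Y\in V$ and $Y(t_0)=0$ then $\langle X'(t_0),Y'(t_0)\rangle=0$. If there exists $Y\in V$ with $Y(t^* )=0$ for some $t^*\in(t_1,t_2]$ and $\langle X(t_0),Y(t_0)\rangle\neq0$, then $X$ is not parallel on $[t_0,t_2]$.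
   Context: $c$ is a unit-speed geodesic, $E_t=\dot c(t)^\perp$, $'=\nabla_{\dot c}$. A self-adjoint family of Jacobi fields is an $n$-dimensional vector space $V$ of Jacobi fields along $c$, orthogonal to $\dot c$, with $\langle X',Y\rangle=\langle X,Y'\rangle$ for all $X,Y\in V$. *)

(* Using a parallel orthonormal frame of E_t = (c')^perp along c, a vector
   field in E along c is a function  F : R -> nat -> R  (only components
   i < n are meaningful), covariant differentiation along c becomes ordinary
   componentwise differentiation, and the curvature operator
   v |-> R(v, c')c' on E_t is a symmetric matrix  Rm t : nat -> nat -> R.
   Non-negative sectional curvature along c means  Rm t  is positive
   semidefinite, and the Jacobi equation is  J'' + Rm J = 0. *)
From Stdlib Require Import Reals.
Open Scope R_scope.

Definition vfield := R -> nat -> R.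

Fixpoint rsum (n : nat) (f : nat -> R) : R :=
  match n with
  | O => 0
  | S m => rsum m f + f m
  end.

Definition ip (n : nat) (u v : nat -> R) : R := rsum n (fun i => u i * v i).

Definition vnorm (n : nat) (u : nat -> R) : R := sqrt (ip n u u).

Definition vzero (n : nat) (u : nat -> R) : Prop := forall i, (i < n)%nat -> u i = 0.

Definition is_vderiv (n : nat) (X DX : vfield) : Prop :=
  forall i, (i < n)%nat -> forall t, derivable_pt_lim (fun s => X s i) t (DX t i).

Definition curv_ok (n : nat) (Rm : R -> nat -> nat -> R) (a b : R) : Prop :=
  (forall i j, (i < n)%nat -> (j < n)%nat -> continuity (fun t => Rm t i j)) /\
  (forall t i j, a <= t <= b -> (i < n)%nat -> (j < n)%nat -> Rm t i j = Rm t j i) /\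
  (forall t (v : nat -> R), a <= t <= b ->
      0 <= rsum n (fun i => v i * rsum n (fun j => Rm t i j * v j))).

Definition jacobi (n : nat) (Rm : R -> nat -> nat -> R) (a b : R) (J : vfield) : Prop :=
  exists DJ DDJ : vfield,
    is_vderiv n J DJ /\ is_vderiv n DJ DDJ /\
    forall t i, a <= t <= b -> (i < n)%nat ->
      DDJ t i = - rsum n (fun j => Rm t i j * J t j).

(* V (given as a predicate) is an n-dimensional vector space of Jacobi fields
   (fields identified when they agree on [a,b]), with a basis B_0..B_{n-1},
   and is self-adjoint: <X',Y> = <X,Y'>. *)
Definition selfadjoint_family (n : nat) (Rm : R -> nat -> nat -> R) (a b : R)
    (V : vfield -> Prop) : Prop :=
  (forall X, V X -> jacobi n Rm a b X) /\
  (forall X Y (c d : R), V X -> V Y -> V (fun t i => c * X t i + d * Y t i)) /\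
  (exists B : nat -> vfield,
      (forall k, (k < n)%nat -> V (B k)) /\
      (forall co : nat -> R,
          (forall t i, a <= t <= b -> (i < n)%nat ->
             rsum n (fun k => co k * B k t i) = 0) ->
          forall k, (k < n)%nat -> co k = 0) /\
      (forall Y, V Y -> exists co : nat -> R,
          forall t i, a <= t <= b -> (i < n)%nat ->
            Y t i = rsum n (fun k => co k * B k t i))) /\
  (forall X Y DX DY, V X -> V Y -> is_vderiv n X DX -> is_vderiv n Y DY ->
     forall t, a <= t <= b -> ip n (DX t) (Y t) = ip n (X t) (DY t)).

(* If X is parallel then, by self-adjointness, <X, Y>' = <X', Y> + <X, Y'>
   = 2 <X', Y> = 0 for every Y in V, so <X, Y> is constant along c.  A field Y
   of V vanishing at s in (t1, t2] has <X(t0), Y(t0)> = <X(s), Y(s)> = 0. *)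
From Stdlib Require Import Reals Lra.
Open Scope R_scope.

Lemma rsum_plus m f g : rsum m (fun i => f i + g i) = rsum m f + rsum m g.
Proof. induction m as [|m IH]; simpl; [|rewrite IH]; lra. Qed.

Lemma rsum_eq0 m f : (forall i, (i < m)%nat -> f i = 0) -> rsum m f = 0.
Proof.
  induction m as [|m IH]; intros Hf; simpl; [reflexivity|].
  rewrite IH, Hf by auto; lra.
Qed.

Lemma ip_vzero_l m u v : vzero m u -> ip m u v = 0.
Proof. intros Hu; apply rsum_eq0; intros i Hi; rewrite Hu by exact Hi; ring. Qed.

Lemma ip_vzero_r m u v : vzero m v -> ip m u v = 0.
Proof. intros Hv; apply rsum_eq0; intros i Hi; rewrite Hv by exact Hi; ring. Qed.

Lemma derivable_pt_lim_ip m (X Y DX DY : vfield) t :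
  is_vderiv m X DX -> is_vderiv m Y DY ->
  derivable_pt_lim (fun s => ip m (X s) (Y s)) t
    (ip m (DX t) (Y t) + ip m (X t) (DY t)).
Proof.
  intros HX HY; unfold ip; rewrite <- rsum_plus.
  induction m as [|m IH]; simpl.
  - apply derivable_pt_lim_const.
  - apply (derivable_pt_lim_plus (fun s => rsum m (fun i => X s i * Y s i))
                                 (fun s => X s m * Y s m)).
    + apply IH; intros i Hi; [apply HX | apply HY]; auto.
    + apply (derivable_pt_lim_mult (fun s => X s m) (fun s => Y s m)); auto.
Qed.

Section ParallelField.

Variables (n : nat) (Rm : R -> nat -> nat -> R) (a b : R) (V : vfield -> Prop).
Hypothesis HV : selfadjoint_family n Rm a b V.

Variables (X DX : vfield).
Hypotheses (HVX : V X) (HDX : is_vderiv n X DX).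
Hypothesis X_parallel : forall t, a <= t <= b -> vzero n (DX t).

Lemma derivable_pt_lim_ip_parallel Y t :
  V Y -> a <= t <= b -> derivable_pt_lim (fun s => ip n (X s) (Y s)) t 0.
Proof.
  intros HVY Ht.
  destruct HV as [Hjac [_ [_ Hsa]]].
  destruct (Hjac Y HVY) as [DY [_ [HDY _]]].
  assert (Hzero : ip n (DX t) (Y t) + ip n (X t) (DY t) = 0).
  { rewrite <- (Hsa X Y DX DY HVX HVY HDX HDY t Ht).
    rewrite ip_vzero_l by (apply X_parallel; exact Ht); ring. }
  rewrite <- Hzero; apply derivable_pt_lim_ip; assumption.
Qed.

Lemma ip_parallel_const Y t :
  V Y -> a <= t <= b -> ip n (X t) (Y t) = ip n (X a) (Y a).
Proof.
  intros HVY Ht.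
  destruct (Rle_lt_or_eq_dec a t (proj1 Ht)) as [Hat | <-]; [|reflexivity].
  assert (Hder : forall s, a <= s <= t ->
            derivable_pt_lim (fun s => ip n (X s) (Y s)) s 0).
  { intros s Hs; apply derivable_pt_lim_ip_parallel; [exact HVY | lra]. }
  destruct (MVT_cor2 (fun s => ip n (X s) (Y s)) (fun _ => 0) a t Hat Hder)
    as [c [Hc _]].
  lra.
Qed.

End ParallelField.

Theorem proposition3p3 (n : nat) (Rm : R -> nat -> nat -> R)
  (t0 t1 t2 : R) (V : vfield -> Prop) (X : vfield) :
  t0 < t1 < t2 ->
  curv_ok n Rm t0 t2 ->
  selfadjoint_family n Rm t0 t2 V ->
  V X ->
  (* (a) *)
  vnorm n (X t0) <> 0 -> vnorm n (X t1) <> 0 ->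
  derivable_pt_lim (fun s => vnorm n (X s)) t0 0 ->
  derivable_pt_lim (fun s => vnorm n (X s)) t1 0 ->
  (* (b) *)
  (forall Y, V Y -> ip n (X t1) (Y t1) = 0 -> ip n (X t0) (Y t0) = 0) ->
  (* (c) *)
  (forall Y, V Y -> (exists t, t0 < t < t1 /\ vzero n (Y t)) ->
     ip n (X t0) (Y t0) = 0) ->
  (* (d) *)
  (forall Y DX DY, V Y -> is_vderiv n X DX -> is_vderiv n Y DY ->
     vzero n (Y t0) -> ip n (DX t0) (DY t0) = 0) ->
  (exists Y tstar, V Y /\ t1 < tstar <= t2 /\ vzero n (Y tstar) /\
     ip n (X t0) (Y t0) <> 0) ->
  ~ (exists DX, is_vderiv n X DX /\
       forall t, t0 <= t <= t2 -> vzero n (DX t)).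
Proof.
  intros Ht _ HV HVX _ _ _ _ _ _ _ [Y [ts [HVY [Hts [HYts Hne]]]]]
         [DX [HDX Hpar]].
  apply Hne.
  rewrite <- (ip_parallel_const n Rm t0 t2 V HV X DX HVX HDX Hpar Y ts HVY)
    by lra.
  apply ip_vzero_r; exact HYts.
Qed.
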